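(* Let $a:[0,1]\to[0,\infty)$ be bounded and measurable and $N\ge1$. The matrix $M_h^{-1}(K_h+L_h)$ has $N$ simple, positive, real eigenvalues $(\mu_h^n)_{1\le n\le N}$, and corresponding eigenvectors $(\Psi_h^n)_{1\le n\le N}\subset\mathbb{R}^N$ can be chosen to form an orthonormal basis of $\mathbb{C}^N$ with respect to the inner product $\langle U,W\rangle_M=\langle M_hU,W\rangle$.
   Context: $h=1/(N+1)$, $x_j=jh$, $a_j=a(x_j)$; $K_h=\frac1h\mathrm{tridiag}(-1,2,-1)$, $M_h=\frac h4\mathrm{tridiag}(1,2,1)$, $L_h=h\,\mathrm{diag}(a_1,\dots,a_N)$ ($N\times N$ real matrices); $\langle U,W\rangle=\sum_j u_j\overline{w_j}$ on $\mathbb{C}^N$. *)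

From HB Require Import structures.
From mathcomp Require Import all_boot all_order all_algebra.
From mathcomp Require Import all_classical all_reals all_analysis.
From mathcomp Require Import complex.
Set Implicit Arguments. Unset Strict Implicit. Unset Printing Implicit Defensive.
Import Order.TTheory GRing.Theory Num.Theory.
Local Open Scope ring_scope.

Section FEM.
Variables (R : realType) (N : nat).

(* mesh size h = 1/(N+1); the index i : 'I_N stands for the paper's j = i+1 *)
Definition hstep : R := (N.+1%:R)^-1.
Definition node (i : 'I_N) : R := (i.+1)%:R * hstep.

Definition adjacent (i j : 'I_N) : bool := (i.+1 == j :> nat) || (j.+1 == i :> nat).

Definition Kh : 'M[R]_N :=
  \matrix_(i, j) (hstep^-1 * (if i == j then 2 else if adjacent i j then -1 else 0)).
Definition Mh : 'M[R]_N :=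
  \matrix_(i, j) (hstep / 4 * (if i == j then 2 else if adjacent i j then 1 else 0)).
Definition Lh (a : R -> R) : 'M[R]_N :=
  \matrix_(i, j) (if i == j then hstep * a (node i) else 0).

Definition Ah (a : R -> R) : 'M[R]_N := invmx Mh *m (Kh + Lh a).

Definition cplx (x : R) : R[i] := (x%:C)%C.
Definition toC (U : 'cV[R]_N) : 'cV[R[i]]_N := map_mx cplx U.

Definition cdot (U W : 'cV[R[i]]_N) : R[i] := \sum_j U j 0 * conjc (W j 0).
Definition Mdot (U W : 'cV[R[i]]_N) : R[i] := cdot (map_mx cplx Mh *m U) W.

End FEM.

From Pilot Require Import Defs.
From HB Require Import structures.
From mathcomp Require Import all_boot all_order all_algebra.
From mathcomp Require Import all_classical all_reals all_analysis.
From mathcomp Require Import complex zify.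
Set Implicit Arguments. Unset Strict Implicit. Unset Printing Implicit Defensive.
Import Order.TTheory GRing.Theory Num.Theory.
Local Open Scope classical_set_scope.
Local Open Scope ring_scope.

(* M_h and K_h + L_h are symmetric positive definite: tridiag(2, s) with s = +-1
   is the Gram matrix D^T D of the (N+1) x N bidiagonal matrix D with rows
   e_k + s e_(k-1), and L_h >= 0 because a >= 0.  Over C, factor M_h = T^* T;
   then T (M_h^-1 (K_h + L_h)) T^-1 = T^-* (K_h + L_h) T^-1 is Hermitian, so
   M_h^-1 (K_h + L_h) is diagonalisable with real eigenvalues, positive since
   both forms are.  Each eigenvalue mu is simple: K_h + L_h - mu M_h is
   tridiagonal with nonvanishing off-diagonal entries, so an eigenvector is
   determined by its first coordinate.  Eigenvectors of distinct eigenvalues are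
   M_h-orthogonal, and normalising real ones gives the M_h-orthonormal basis. *)

Section RealForms.
Variables (R : realFieldType) (n : nat).
Implicit Types (X Y : 'M[R]_n) (u v : 'cV[R]_n).

Definition mxform X u v : R := (u^T *m (X *m v)) 0 0.

Definition posdefmx X := forall u, u != 0 -> 0 < mxform X u u.

Lemma mxform_sym X u v : X^T = X -> mxform X u v = mxform X v u.
Proof.
move=> XT; rewrite /mxform; transitivity ((u^T *m X *m v)^T 0 0).
  by rewrite [RHS]mxE mulmxA.
by rewrite !trmx_mul trmxK XT.
Qed.

Lemma mxformZl X a u v : mxform X (a *: u) v = a * mxform X u v.
Proof. by rewrite /mxform linearZ /= -scalemxAl mxE. Qed.

Lemma mxformZr X a u v : mxform X u (a *: v) = a * mxform X u v.
Proof. by rewrite /mxform -!scalemxAr mxE. Qed.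

Lemma mxformMr X Y u v : mxform (X *m Y) u v = mxform X u (Y *m v).
Proof. by rewrite /mxform -mulmxA. Qed.

Lemma posdefmx1 : posdefmx 1%:M.
Proof.
move=> u u_neq0; rewrite /mxform mul1mx mxE lt_def sumr_ge0 ?andbT; last first.
  by move=> k _; rewrite mxE -expr2 sqr_ge0.
apply: contra u_neq0 => /eqP sum0; apply/eqP/matrixP => i j; rewrite ord1 mxE.
have sq_ge0 k : true -> 0 <= u^T 0 k * u k 0 by rewrite mxE -expr2 sqr_ge0.
have := psumr_eq0P sq_ge0 sum0 (i := i) isT.
by rewrite mxE -expr2 => /eqP; rewrite sqrf_eq0 => /eqP.
Qed.

Lemma posdefmxD X Y :
  posdefmx X -> (forall u, 0 <= mxform Y u u) -> posdefmx (X + Y).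
Proof.
move=> Xpd Ypsd u u_neq0; rewrite /mxform mulmxDl mulmxDr mxE.
exact: ltr_wpDr (Ypsd u) (Xpd u u_neq0).
Qed.

Lemma posdefmxZ a X : 0 < a -> posdefmx X -> posdefmx (a *: X).
Proof.
by move=> a_gt0 Xpd u u_neq0; rewrite /mxform -scalemxAl -scalemxAr mxE mulr_gt0 ?Xpd.
Qed.

Lemma posdefmx_unit X : posdefmx X -> X \in unitmx.
Proof.
move=> Xpd; rewrite unitmxE unitfE; apply/negP => /det0P [v v_neq0 vX0].
have vT_neq0 : v^T != 0 by rewrite trmx_eq0.
by have := Xpd _ vT_neq0; rewrite /mxform trmxK mulmxA vX0 mul0mx mxE ltxx.
Qed.

Lemma posdefmx_geneig_gt0 X Y u d : posdefmx X -> posdefmx Y -> u != 0 ->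
  Y *m u = d *: (X *m u) -> 0 < d.
Proof.
move=> Xpd Ypd u_neq0 Yu; have := Ypd u u_neq0.
by rewrite /mxform Yu -scalemxAr mxE pmulr_lgt0 ?Xpd.
Qed.

Lemma mxform_eigen_orth X Y Z u v lam mu :
  X^T = X -> Y^T = Y -> X *m Z = Y -> Z *m u = lam *: u -> Z *m v = mu *: v ->
  lam != mu -> mxform X u v = 0.
Proof.
move=> XT YT XZ Zu Zv lam_neq_mu.
have YE w k : Z *m w = k *: w -> forall w', mxform Y w' w = k * mxform X w' w.
  by move=> Zw w'; rewrite -XZ mxformMr Zw mxformZr.
have := YE _ _ Zv u; rewrite mxform_sym // (YE _ _ Zu) mxform_sym // => /eqP.
by rewrite -subr_eq0 -mulrBl mulf_eq0 subr_eq0 (negbTE lam_neq_mu) => /eqP.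
Qed.

Lemma orthonormal_unitmx X (Psi : 'I_n -> 'cV[R]_n) :
  (forall i j, mxform X (Psi i) (Psi j) = (i == j)%:R) ->
  \matrix_(i, j) Psi j i 0 \in unitmx.
Proof.
move=> Psi_on; set P := \matrix_(i, j) _.
have PXP : P^T *m (X *m P) = 1%:M.
  apply/matrixP => k l; rewrite [RHS]mxE -Psi_on /mxform !mxE.
  apply: eq_bigr => j _; rewrite !mxE; congr (_ * _).
  by apply: eq_bigr => t _; rewrite !mxE.
by have [PT_unit _] := mulmx1_unit PXP; rewrite -unitmx_tr.
Qed.

End RealForms.

Definition unreduced_hessenberg (F : pzRingType) n (T : 'M[F]_n) :=
  (forall i j : 'I_n, (i.+1 < j)%N -> T i j = 0) /\
  (forall i j : 'I_n, j = i.+1 :> nat -> T i j != 0).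

Section UnreducedHessenberg.
Variables (F : fieldType) (n : nat) (T : 'M[F]_n).
Hypothesis T_hess : unreduced_hessenberg T.

Lemma unreduced_hessenberg_ker (v : 'cV[F]_n) : T *m v = 0 ->
  (forall i : 'I_n, i = 0%N :> nat -> v i 0 = 0) -> v = 0.
Proof.
case: T_hess => T_out T_super Tv0 v_head.
suff v_le k (i : 'I_n) : (i <= k)%N -> v i 0 = 0.
  by apply/matrixP => i j; rewrite ord1 mxE (v_le i).
elim: k i => [|k IHk] i le_ik; first by apply: v_head; apply/eqP; rewrite -leqn0.
have [|lt_ki] := leqP i k; first exact: IHk.
have i_eq : val i = k.+1 by apply/eqP; rewrite eqn_leq le_ik lt_ki.
pose ik := Ordinal (ltn_trans lt_ki (ltn_ord i)).
(* Row [k] of [T v = 0] involves [v] only up to index [k+1 = i],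
   whose coefficient is nonzero. *)
have /matrixP/(_ ik 0) := Tv0; rewrite !mxE (bigD1 i) //= big1.
  by rewrite addr0 => /eqP; rewrite mulf_eq0 (negbTE (T_super ik i i_eq)) => /eqP.
move=> j j_neq_i; have [le_jk|lt_kj] := leqP j k; first by rewrite IHk ?mulr0.
rewrite T_out ?mul0r //= ltn_neqAle lt_kj andbT -i_eq.
by move: j_neq_i; rewrite eq_sym -(inj_eq val_inj).
Qed.

Lemma unreduced_hessenberg_ker_dim1 (u v : 'cV[F]_n) : u != 0 ->
  T *m u = 0 -> T *m v = 0 -> exists c, v = c *: u.
Proof.
move=> u_neq0 Tu0 Tv0.
have /forallPn [i0] : ~~ [forall i : 'I_n, (val i == 0%N) ==> (u i 0 == 0)].
  apply: contra u_neq0 => /forallP u_head; apply/eqP/unreduced_hessenberg_ker => //.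
  by move=> i /eqP i_0; apply/eqP/(implyP (u_head i)).
rewrite negb_imply => /andP[/eqP i0_0 u_i0_neq0].
exists (v i0 0 / u i0 0); apply/eqP; rewrite -subr_eq0; apply/eqP.
apply: unreduced_hessenberg_ker => [|i i_0].
  by rewrite mulmxBr -scalemxAr Tu0 Tv0 scaler0 subr0.
have -> : i = i0 by apply: val_inj; rewrite /= i_0 i0_0.
by rewrite !mxE divfK ?subrr.
Qed.
End UnreducedHessenberg.

Lemma map_unreduced_hessenberg (F K : fieldType) (f : {rmorphism F -> K}) n (T : 'M[F]_n) :
  unreduced_hessenberg T -> unreduced_hessenberg (map_mx f T).
Proof.
case=> T_out T_super; split=> i j ij; rewrite mxE; first by rewrite T_out ?rmorph0.
by rewrite fmorph_eq0 T_super.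
Qed.

Section Tridiagonal.
Variables (F : comPzRingType) (m : nat).

Definition tridiag (al be : F) : 'M[F]_m :=
  \matrix_(i, j) (if i == j then al else if Defs.adjacent i j then be else 0).

Definition bidiag (s : F) : 'M[F]_(m.+1, m) :=
  \matrix_(k, j) ((k == widen_ord (leqnSn m) j)%:R + s * (k == lift ord0 j)%:R).

Lemma tr_tridiag al be : (tridiag al be)^T = tridiag al be.
Proof. by apply/matrixP => i j; rewrite !mxE eq_sym /Defs.adjacent orbC. Qed.

Lemma tridiag_out al be (i j : 'I_m) : (i.+1 < j)%N -> tridiag al be i j = 0.
Proof.
move=> lt_ij; rewrite mxE -(inj_eq val_inj) /Defs.adjacent /=.
by rewrite !ifF //; apply/negbTE; lia.
Qed.

Lemma tridiag_super al be (i j : 'I_m) : j = i.+1 :> nat -> tridiag al be i j = be.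
Proof.
move=> j_eq; rewrite mxE -(inj_eq val_inj) /Defs.adjacent /= j_eq eqxx.
by rewrite ifF //; apply/negbTE; lia.
Qed.

Lemma sum_nat_delta p (a : 'I_p) (G : 'I_p -> F) :
  \sum_(k < p) (k == a)%:R * G k = G a.
Proof.
rewrite (bigD1 a) //= eqxx mul1r big1 ?addr0 // => k /negbTE ->.
by rewrite mul0r.
Qed.

Lemma tridiag_gram s : tridiag (1 + s ^+ 2) s = (bidiag s)^T *m bidiag s.
Proof.
apply/matrixP => i j; rewrite !mxE.
under eq_bigr do rewrite !mxE mulrDl -mulrA.
rewrite big_split /= -mulr_sumr !sum_nat_delta -!(inj_eq val_inj) /=.
rewrite /Defs.adjacent /bump /= !add1n eqSS.
case: (ltngtP i j) => [lt_ij|lt_ji|->].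
- rewrite (ltn_eqF (ltnW lt_ij : (i < j.+1)%N)) (gtn_eqF (ltnW lt_ij : (i < j.+1)%N)).
  by case: (i.+1 == j :> nat); rewrite orbF !(mulr0, mulr1, addr0, add0r).
- rewrite (gtn_eqF (ltnW lt_ji : (j < i.+1)%N)) [i == j.+1 :> nat]eq_sym.
  by case: (j.+1 == i :> nat); rewrite !(mulr0, mulr1, addr0, add0r).
- by rewrite ltn_eqF // gtn_eqF // mulr1 mulr0 addr0 add0r -expr2.
Qed.

End Tridiagonal.

Lemma tridiag_hessenberg (F : comPzRingType) m (al be : F) :
  be != 0 -> unreduced_hessenberg (tridiag m al be).
Proof. by move=> be_neq0; split=> i j; [apply: tridiag_out | move/tridiag_super ->]. Qed.

Lemma bidiag_head (F : comPzRingType) m (s : F) (u : 'cV[F]_m) (i : 'I_m) :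
  i = 0%N :> nat -> (bidiag m s *m u) (widen_ord (leqnSn m) i) 0 = u i 0.
Proof.
move=> i_0; rewrite mxE -[RHS](sum_nat_delta i (fun j => u j 0)).
apply: eq_bigr => j _; rewrite mxE -!(inj_eq val_inj) /= i_0 eq_sym.
by rewrite mulr0 addr0.
Qed.

Lemma posdef_tridiag (R : realFieldType) m (s : R) :
  s != 0 -> posdefmx (tridiag m (1 + s ^+ 2) s).
Proof.
move=> s_neq0 u u_neq0; rewrite tridiag_gram /mxform -mulmxA mulmxA -trmx_mul.
have Du_neq0 : bidiag m s *m u != 0.
  apply: contra u_neq0 => /eqP Du0; apply/eqP.
  apply: (unreduced_hessenberg_ker (tridiag_hessenberg m (1 + s ^+ 2) s_neq0)).
    by rewrite tridiag_gram -mulmxA Du0 mulmx0.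
  by move=> i i_0; rewrite -(bidiag_head s) // Du0 mxE.
by have := posdefmx1 Du_neq0; rewrite /mxform mul1mx.
Qed.

Section Diagonalization.
Variables (F : fieldType) (n : nat).
Implicit Types (X G : 'M[F]_n) (d : 'rV[F]_n).

Lemma char_poly_conj X G : G \in unitmx -> char_poly (invmx G *m X *m G) = char_poly X.
Proof.
move=> G_unit; rewrite /char_poly /char_poly_mx !map_mxM.
set Gi := map_mx polyC (invmx G); set Gp := map_mx polyC G.
have GiGp : Gi *m Gp = 1%:M by rewrite -map_mxM mulVmx // map_mx1.
have XE : ('X%:M : 'M[{poly F}]_n) = Gi *m 'X%:M *m Gp.
  by rewrite scalar_mxC -mulmxA GiGp mulmx1.
by rewrite [in LHS]XE -mulmxBl -mulmxBr !det_mulmx mulrAC -det_mulmx GiGp det1 mul1r.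
Qed.

Lemma char_poly_eigenbasis X P d : P \in unitmx -> X *m P = P *m diag_mx d ->
  char_poly X = \prod_i ('X - (d 0 i)%:P).
Proof.
move=> P_unit XP; have -> : X = invmx (invmx P) *m diag_mx d *m invmx P.
  by rewrite invmxK -XP mulmxK.
rewrite char_poly_conj ?unitmx_inv // char_poly_trig ?diag_mx_is_trig //.
by apply: eq_bigr => i _; rewrite mxE eqxx mulr1n.
Qed.

Lemma eigen_col_diag X G d : G \in unitmx -> X *m G = G *m diag_mx d ->
  forall i, col i G != 0 /\ X *m col i G = d 0 i *: col i G.
Proof.
move=> G_unit XG i; rewrite colE; split.
  apply/eqP => /(congr1 (mulmx (invmx G))); rewrite mulKmx // mulmx0.
  by move/matrixP/(_ i 0); rewrite !mxE !eqxx => /eqP; rewrite oner_eq0.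
rewrite mulmxA XG -mulmxA scalemxAr; congr (_ *m _).
apply/matrixP => k l; rewrite mul_diag_mx !mxE ord1.
by case: eqP => [->|]; rewrite ?mulr1 ?mulr0.
Qed.

Lemma eigenbasis_inj X P d : P \in unitmx -> X *m P = P *m diag_mx d ->
  (forall i (u v : 'cV_n), u != 0 -> X *m u = d 0 i *: u -> X *m v = d 0 i *: v ->
     exists c, v = c *: u) ->
  injective (fun i => d 0 i).
Proof.
move=> P_unit XP eig_dim1 i j dij; apply/eqP; apply: contraT => i_neq_j.
have [ui_neq0 Xui] := eigen_col_diag P_unit XP i.
have [_ Xuj] := eigen_col_diag P_unit XP j; rewrite -dij in Xuj.
have [c cE] := eig_dim1 i _ _ ui_neq0 Xui Xuj.
have : P *m (delta_mx j 0 - c *: delta_mx i 0 : 'cV_n) = 0.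
  by rewrite mulmxBr -scalemxAr -!colE cE subrr.
move/(congr1 (mulmx (invmx P))); rewrite mulKmx // mulmx0 => /matrixP/(_ j 0).
by rewrite !mxE !eqxx eq_sym (negbTE i_neq_j) mulr0 subr0 => /eqP; rewrite oner_eq0.
Qed.

End Diagonalization.

Section HermitianPencil.
Local Open Scope sesquilinear_scope.
Variables (C : numClosedFieldType) (n : nat) (M B A T : 'M[C]_n).
Hypotheses (T_unit : T \in unitmx) (ME : M = T^t* *m T) (B_herm : B \is hermsymmx).
Hypothesis MA : M *m A = B.

Lemma hermitian_pencil_diag :
  exists2 P, P \in unitmx & exists2 e : 'rV[C]_n, e \is a realmx & A *m P = P *m diag_mx e.
Proof.
pose Ti := invmx T; pose H := Ti^t* *m B *m Ti.
have BE : B^t* = B by rewrite {2}(is_hermitianmxP _ _ _ B_herm) expr0 scale1r.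
have H_herm : H \is hermsymmx.
  apply/is_hermitianmxP; rewrite expr0 scale1r /H !trmx_mul !map_mxM trmxCK BE.
  by rewrite mulmxA.
pose Q := spectralmx H; pose e := spectral_diag H.
have Q_unit : Q \in unitmx := spectral_unit H.
have HE : H = invmx Q *m diag_mx e *m Q.
  exact/orthomx_spectralP/hermitian_normalmx.
have TA : T *m A = Ti^t* *m B.
  by rewrite -MA ME !mulmxA -map_mxM -trmx_mul mulmxV // trmx1 map_mx1 mul1mx.
exists (Ti *m invmx Q); first by rewrite unitmx_mul !unitmx_inv T_unit.
exists e; first exact: hermitian_spectral_diag_real.
(* [A] is similar to the Hermitian [H = T A T^-1]. *)
rewrite mulmxA -[A *m Ti](mulKmx T_unit) (mulmxA T) TA -/H HE.
by rewrite !mulmxA mulmxK.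
Qed.

End HermitianPencil.

Section RealToComplex.
Local Open Scope sesquilinear_scope.
Variables (R : rcfType) (n : nat).
Local Notation cp := (real_complex R).
Implicit Types (X M B A : 'M[R]_n).

Lemma complex_real (x : R) : cp x \is Num.real.
Proof. by apply/complex_realP; exists x. Qed.

Lemma real_eigenvector X (lam : R) (v : 'cV[R[i]]_n) :
  v != 0 -> map_mx cp X *m v = cp lam *: v ->
  exists2 w : 'cV[R]_n, w != 0 & X *m w = lam *: w.
Proof.
move=> v_neq0 Xv.
have : eigenvalue (map_mx cp X^T) (cp lam).
  apply/eigenvalueP; exists v^T; last by rewrite trmx_eq0.
  by rewrite -map_trmx -trmx_mul Xv linearZ.
rewrite eigenvalue_map => /eigenvalueP [w wX w_neq0].
exists w^T; first by rewrite trmx_eq0.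
by rewrite -[X]trmxK -trmx_mul wX linearZ.
Qed.

Lemma map_sym_hermitian X : X^T = X -> map_mx cp X \is hermsymmx.
Proof.
move=> XT; apply/is_hermitianmxP; rewrite expr0 scale1r.
by apply/matrixP => i j; rewrite !mxE conj_Creal ?complex_real // -[in LHS]XT mxE.
Qed.

Lemma posdef_herm_factor M : M^T = M -> posdefmx M ->
  exists2 T, T \in unitmx & map_mx cp M = T^t* *m T.
Proof.
move=> MT M_pd; have M_herm := map_sym_hermitian MT.
pose P := spectralmx (map_mx cp M); pose d := spectral_diag (map_mx cp M).
have P_unitary : P \is unitarymx := spectral_unitarymx _.
have P_unit : P \in unitmx := spectral_unit _.
have ME : map_mx cp M = invmx P *m diag_mx d *m P.
  exact/orthomx_spectralP/hermitian_normalmx.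
have d_gt0 i : 0 < d 0 i.
  have Pi_unit : invmx P \in unitmx by rewrite unitmx_inv.
  have MPi : map_mx cp M *m invmx P = invmx P *m diag_mx d by rewrite ME mulmxK.
  have [v_neq0 Mv] := eigen_col_diag Pi_unit MPi i.
  have d_real : d 0 i \is Num.real := mxOverP (hermitian_spectral_diag_real M_herm) 0 i.
  rewrite -(RRe_real d_real) in Mv *; have [w w_neq0 Mw] := real_eigenvector v_neq0 Mv.
  rewrite ltcR; apply: (posdefmx_geneig_gt0 (@posdefmx1 _ _) M_pd w_neq0).
  by rewrite mul1mx.
pose r := \row_i sqrtC (d 0 i).
exists (diag_mx r *m P).
  rewrite unitmx_mul P_unit andbT unitmxE det_diag unitfE prodf_seq_neq0.
  by apply/allP => i _; rewrite mxE sqrtC_eq0 gt_eqF.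
rewrite trmx_mul map_mxM -invmx_unitary // tr_diag_mx map_diag_mx mulmxA.
rewrite -(mulmxA _ (diag_mx _)) mulmx_diag ME; congr (_ *m diag_mx _ *m _).
apply/rowP => i; rewrite !mxE /= conj_Creal ?ger0_real ?sqrtC_ge0 ?ltW //.
by rewrite -expr2 sqrtCK.
Qed.

End RealToComplex.

Section SymmetricPencil.
Variables (R : rcfType) (n : nat) (M B A : 'M[R]_n).
Hypotheses (MT : M^T = M) (BT : B^T = B) (M_pd : posdefmx M) (B_pd : posdefmx B).
Hypothesis MA : M *m A = B.
Local Notation cp := (real_complex R).

Lemma pencil_eigen_gt0 (w : 'cV[R]_n) lam : w != 0 -> A *m w = lam *: w -> 0 < lam.
Proof.
move=> w_neq0 Aw; apply: (posdefmx_geneig_gt0 M_pd B_pd w_neq0).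
by rewrite -MA -mulmxA Aw scalemxAr.
Qed.

Lemma pencil_diag : exists2 P : 'M[R[i]]_n, P \in unitmx &
  exists e : 'rV[R]_n, map_mx cp A *m P = P *m diag_mx (map_mx cp e).
Proof.
have [T T_unit ME] := posdef_herm_factor MT M_pd.
have MAc : map_mx cp M *m map_mx cp A = map_mx cp B by rewrite -map_mxM MA.
have [P P_unit [e e_real AP]] :=
  hermitian_pencil_diag T_unit ME (map_sym_hermitian BT) MAc.
exists P => //; exists (map_mx (@complex.Re R) e).
rewrite AP; congr (_ *m diag_mx _).
by apply/rowP => i; rewrite !mxE RRe_real // (mxOverP e_real).
Qed.

Lemma pencil_eigen_ker (w : 'cV[R[i]]_n) lam : map_mx cp A *m w = cp lam *: w ->
  map_mx cp (B - lam *: M) *m w = 0.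
Proof.
move=> Aw; rewrite map_mxB map_mxZ mulmxBl -scalemxAl -MA map_mxM -mulmxA Aw.
by rewrite -scalemxAr subrr.
Qed.

Lemma pencil_normalize (mu : 'I_n -> R) (w : 'I_n -> 'cV[R]_n) : injective mu ->
  (forall i, w i != 0) -> (forall i, A *m w i = mu i *: w i) ->
  exists2 Psi : 'I_n -> 'cV[R]_n, forall i, A *m Psi i = mu i *: Psi i &
    forall i j, mxform M (Psi i) (Psi j) = (i == j)%:R.
Proof.
move=> mu_inj w_neq0 Aw.
exists (fun i => (Num.sqrt (mxform M (w i) (w i)))^-1 *: w i) => [i|i j].
  by rewrite -scalemxAr Aw !scalerA mulrC.
rewrite mxformZl mxformZr; have [<-|i_neq_j] := eqVneq i j.
  have w_gt0 := M_pd (w_neq0 i).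
  by rewrite mulrA -invfM -expr2 sqr_sqrtr ?ltW // mulVf ?gt_eqF.
by rewrite (mxform_eigen_orth MT BT MA (Aw i) (Aw j)) ?mulr0 ?(inj_eq mu_inj).
Qed.

Hypothesis A_geom_simple : forall (lam : R) (u v : 'cV[R[i]]_n), 0 < lam -> u != 0 ->
  map_mx cp A *m u = cp lam *: u -> map_mx cp A *m v = cp lam *: v ->
  exists c, v = c *: u.

Lemma pencil_eigenbasis : exists (mu : 'I_n -> R) (w : 'I_n -> 'cV[R]_n),
  [/\ injective mu, map_poly cp (char_poly A) = \prod_i ('X - (cp (mu i))%:P),
      forall i, w i != 0 & forall i, A *m w i = mu i *: w i].
Proof.
have [P P_unit [e AP]] := pencil_diag.
have eigen_i i : exists w : 'cV[R]_n, w != 0 /\ A *m w = e 0 i *: w.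
  have [u_neq0 Au] := eigen_col_diag P_unit AP i; rewrite mxE in Au.
  by have [w w_neq0 Aw] := real_eigenvector u_neq0 Au; exists w.
have [w w_eigen] := fin_all_exists eigen_i.
exists (fun i => e 0 i), w; split; last 2 first.
- by move=> i; case: (w_eigen i).
- by move=> i; case: (w_eigen i).
- move=> i j eij; apply: (eigenbasis_inj P_unit AP) => [k u v u_neq0|]; last first.
    by rewrite !mxE eij.
  rewrite mxE; apply: A_geom_simple u_neq0.
  by have [w_neq0 Aw] := w_eigen k; apply: pencil_eigen_gt0 w_neq0 Aw.
rewrite map_char_poly (char_poly_eigenbasis P_unit AP).
by apply: eq_bigr => i _; rewrite mxE.
Qed.

End SymmetricPencil.

Section FiniteElementMatrices.
Variables (R : realType) (N : nat) (a : R -> R).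
Local Notation h := (hstep R N).
Local Notation Bh := (Kh R N + Lh N a).
Local Notation cp := (real_complex R).

Lemma hstep_gt0 : 0 < h.
Proof. by rewrite invr_gt0 ltr0n. Qed.

Lemma node_in01 (i : 'I_N) : 0 <= node R i <= 1.
Proof.
rewrite /node /hstep mulr_ge0 ?invr_ge0 ?ler0n //=.
by rewrite ler_pdivrMr ?ltr0n // mul1r ler_nat ltnS ltnW.
Qed.

Lemma Kh_tridiag : Kh R N = h^-1 *: tridiag N 2 (-1).
Proof. by apply/matrixP => i j; rewrite !mxE. Qed.

Lemma Mh_tridiag : Mh R N = (h / 4) *: tridiag N 2 1.
Proof. by apply/matrixP => i j; rewrite !mxE. Qed.

Lemma Mh_sym : (Mh R N)^T = Mh R N.
Proof. by rewrite Mh_tridiag linearZ /= tr_tridiag. Qed.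

Lemma Bh_sym : Bh^T = Bh.
Proof.
rewrite linearD /= Kh_tridiag linearZ /= tr_tridiag; congr (_ + _).
by apply/matrixP => i j; rewrite !mxE eq_sym; case: eqP => // ->.
Qed.

Lemma Mh_posdef : posdefmx (Mh R N).
Proof.
rewrite Mh_tridiag; apply: posdefmxZ; first by rewrite divr_gt0 ?hstep_gt0.
by have := @posdef_tridiag _ N _ (oner_neq0 R); rewrite expr1n.
Qed.

Lemma Mh_Ah : Mh R N *m Ah N a = Bh.
Proof. by rewrite /Ah mulmxA mulmxV ?mul1mx // (posdefmx_unit Mh_posdef). Qed.

Lemma Bh_pencil_hessenberg lam :
  0 < lam -> unreduced_hessenberg (Bh - lam *: Mh R N).
Proof.
move=> lam_gt0; split=> i j ij; rewrite !mxE -(inj_eq val_inj) /Defs.adjacent /=.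
  have -> : (i == j :> nat) = false by apply/negbTE; lia.
  have -> : (i.+1 == j :> nat) || (j.+1 == i :> nat) = false by apply/negbTE; lia.
  by rewrite !mulr0 addr0 subrr.
have -> : (i == j :> nat) = false by apply/negbTE; lia.
rewrite ij eqxx /= addr0 mulrN1 mulr1 lt_eqF // subr_lt0.
rewrite (lt_trans _ (mulr_gt0 lam_gt0 _)) ?divr_gt0 ?hstep_gt0 //.
by rewrite oppr_lt0 invr_gt0 hstep_gt0.
Qed.

Lemma Ah_geom_simple (lam : R) (u v : 'cV[R[i]]_N) : 0 < lam -> u != 0 ->
  map_mx cp (Ah N a) *m u = cp lam *: u -> map_mx cp (Ah N a) *m v = cp lam *: v ->
  exists c, v = c *: u.
Proof.
move=> lam_gt0 u_neq0 Au Av.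
have T_hess := map_unreduced_hessenberg cp (Bh_pencil_hessenberg lam_gt0).
exact: unreduced_hessenberg_ker_dim1 T_hess _ _ u_neq0
  (pencil_eigen_ker Mh_Ah Au) (pencil_eigen_ker Mh_Ah Av).
Qed.

Lemma Mdot_toC (u v : 'cV[R]_N) : Mdot (toC u) (toC v) = cp (mxform (Mh R N) v u).
Proof.
rewrite /Mdot /cdot /toC /mxform -map_mxM [in RHS]mxE rmorph_sum.
by apply: eq_bigr => j _; rewrite !mxE conjc_real -rmorphM mulrC.
Qed.

Hypothesis a_ge0 : forall x : R, 0 <= x <= 1 -> 0 <= a x.

Lemma Bh_posdef : posdefmx Bh.
Proof.
apply: posdefmxD.
  rewrite Kh_tridiag; apply: posdefmxZ; first by rewrite invr_gt0 hstep_gt0.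
  have N1_neq0 : (-1 : R) != 0 by rewrite oppr_eq0 oner_neq0.
  by have := @posdef_tridiag _ N _ N1_neq0; rewrite sqrrN expr1n.
move=> u; rewrite /mxform mxE; apply: sumr_ge0 => i _.
rewrite !mxE (bigD1 i) //= big1 => [|j j_neq_i]; last first.
  by rewrite !mxE eq_sym (negbTE j_neq_i) mul0r.
rewrite !mxE eqxx addr0 mulrCA -expr2 mulr_ge0 ?sqr_ge0 //.
exact: mulr_ge0 (ltW hstep_gt0) (a_ge0 (node_in01 i)).
Qed.

End FiniteElementMatrices.

Theorem lemma1 (R : realType) (a : R -> R) (N : nat) :
  measurable_fun (`[0%R, 1%R] : set R) a ->
  (exists C : R, forall x : R, 0 <= x <= 1 -> `|a x| <= C) ->
  (forall x : R, 0 <= x <= 1 -> 0 <= a x) ->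
  (1 <= N)%N ->
  exists (mu : 'I_N -> R) (Psi : 'I_N -> 'cV[R]_N),
    [/\ injective mu /\ char_poly (@Ah R N a) = \prod_(n < N) ('X - (mu n)%:P),
        (forall n, 0 < mu n),
        (forall n, @Ah R N a *m Psi n = mu n *: Psi n),
        (forall n m, @Mdot R N (@toC R N (Psi n)) (@toC R N (Psi m)) = (n == m)%:R) &
        \rank (\matrix_(i < N, j < N) cplx (Psi j i 0)) = N].
Proof.
move=> _ _ a_ge0 _.
have MT := Mh_sym R N; have BT := Bh_sym N a; have MA := Mh_Ah N a.
have M_pd := @Mh_posdef R N; have B_pd := @Bh_posdef R N a a_ge0.
have [mu [w [mu_inj charA w_neq0 Aw]]] :=
  pencil_eigenbasis MT BT M_pd B_pd MA (@Ah_geom_simple R N a).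
have [Psi APsi Psi_on] := pencil_normalize MT BT M_pd MA mu_inj w_neq0 Aw.
exists mu, Psi; split => [||//||].
- split=> //; apply: (map_poly_inj (real_complex R)).
  by rewrite charA map_prod_XsubC.
- move=> n; exact: (pencil_eigen_gt0 M_pd B_pd MA (w_neq0 n) (Aw n)).
- by move=> n m; rewrite Mdot_toC Psi_on eq_sym rmorph_nat.
have -> : \matrix_(i < N, j < N) cplx (Psi j i 0) =
          map_mx (real_complex R) (\matrix_(i, j) Psi j i 0).
  by apply/matrixP => i j; rewrite !mxE.
by rewrite mxrank_map mxrank_unit // (orthonormal_unitmx Psi_on).
Qed.
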